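(* Let $p(z)=z^n+a_nz^{n-1}+\cdots+a_2z+a_1$ be a complex monic polynomial with $n\geq2$ and $a_1\neq0$. If $z\in\mathbb{C}$ is any zero of $p$, then $$|z|\leq\left\{\frac{1}{2}\sqrt{\frac{\delta+1+\sqrt{(\delta-1)^2+4\delta'}}{2}}+\frac{1}{2}\left(\frac{1}{2}\left(\delta_1+\delta+\sqrt{(\delta_1-\delta)^2+4\delta_2}\right)+1\right)^{1/4}\right\}^{1/2}.$$
   Context: Let $C_p$ be the $n\times n$ matrix whose first row is $(-a_n,-a_{n-1},\dots,-a_2,-a_1)$, whose entries $(k+1,k)$ equal $1$ for $k=1,\dots,n-1$, and whose other entries are $0$. Define numbers $b_j,c_j,d_j$ ($j=1,\dots,n$) by: the first row of $C_p^2$ is $(b_n,b_{n-1},\dots,b_1)$, the first row of $C_p^3$ is $(c_n,\dots,c_1)$, the first row of $C_p^4$ is $(d_n,\dots,d_1)$ (so $b_j=a_na_j-a_{j-1}$, $c_j=-a_nb_j+a_{n-1}a_j-a_{j-2}$ with $a_0=a_{-1}=0$). Set $\alpha=\sum_{j=1}^n|a_j|^2$, $\beta=\sum_{j=1}^n|b_j|^2$, $\gamma=-\sum_{j=1}^n b_j\overline{a_j}$, $\delta=\frac{1}{2}\left(\alpha+\beta+\sqrt{(\alpha-\beta)^2+4|\gamma|^2}\right)$; $\alpha'=\sum_{j=3}^n|a_j|^2$, $\beta'=\sum_{j=3}^n|b_j|^2$, $\gamma'=-\sum_{j=3}^n\overline{a_j}b_j$, $\delta'=\frac12\left(\alpha'+\beta'+\sqrt{(\alpha'-\beta')^2+4|\gamma'|^2}\right)$;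 $\alpha_1=\sum_{j=1}^n|d_j|^2$, $\beta_1=\sum_{j=1}^n|c_j|^2$, $\gamma_1=\sum_{j=1}^n d_j\overline{c_j}$, $\delta_1=\frac12\left(\alpha_1+\beta_1+\sqrt{(\alpha_1-\beta_1)^2+4|\gamma_1|^2}\right)$; $\gamma_2=\sum_{j=1}^n d_j\overline{b_j}$, $\gamma_3=\sum_{j=1}^n d_j\overline{a_j}$, $\gamma_4=\sum_{j=1}^n c_j\overline{b_j}$, $\gamma_5=\sum_{j=1}^n c_j\overline{a_j}$, and $\delta_2=\frac12\Big(|\gamma_2|^2+|\gamma_3|^2+|\gamma_4|^2+|\gamma_5|^2+\sqrt{\big((|\gamma_2|^2+|\gamma_3|^2)-(|\gamma_4|^2+|\gamma_5|^2)\big)^2+4|\gamma_2\overline{\gamma_4}+\gamma_3\overline{\gamma_5}|^2}\Big)$. *)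

From HB Require Import structures.
From mathcomp Require Import all_boot all_order all_algebra.
From mathcomp Require Import reals.
From mathcomp.real_closed Require Import complex.
Set Implicit Arguments. Unset Strict Implicit. Unset Printing Implicit Defensive.
Import Order.TTheory GRing.Theory Num.Theory.
Local Open Scope ring_scope.

Section Cauchy.
Variables (R : realType) (n : nat) (a : nat -> R[i]).

Definition monic_poly_of : {poly R[i]} :=
  'X^n + \sum_(1 <= j < n.+1) a j *: 'X^(j.-1).

(* Companion matrix C_p (0-indexed): row 0 is (-a_n, ..., -a_1),
   entries (k+1, k) are 1, others 0. *)
Definition companion : 'M[R[i]]_n :=
  \matrix_(i < n, j < n)
    (if i == 0 :> nat then - a (n - j)
     else if i == j.+1 :> nat then 1 else 0).

Definition entn (M : 'M[R[i]]_n) (i j : nat) : R[i] :=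
  match (insub i : option 'I_n), (insub j : option 'I_n) with
  | Some i', Some j' => M i' j'
  | _, _ => 0
  end.

(* first row of C_p^2 is (b_n, ..., b_1), i.e. b_j is at 0-indexed column n-j *)
Definition bcoef (j : nat) : R[i] := entn (companion ^+ 2) 0 (n - j).
Definition ccoef (j : nat) : R[i] := entn (companion ^+ 3) 0 (n - j).
Definition dcoef (j : nat) : R[i] := entn (companion ^+ 4) 0 (n - j).

Definition sq (x : R[i]) : R[i] := `|x| ^+ 2.
Definition cj (x : R[i]) : R[i] := Num.conj x.
Definition sqrt (x : R[i]) : R[i] := sqrtC x.

Definition alpha : R[i] := \sum_(1 <= j < n.+1) sq (a j).
Definition beta : R[i] := \sum_(1 <= j < n.+1) sq (bcoef j).
Definition gamma : R[i] := - \sum_(1 <= j < n.+1) bcoef j * (cj (a j)).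
Definition delta : R[i] :=
  (alpha + beta + sqrt ((alpha - beta) ^+ 2 + 4 * sq gamma)) / 2.

Definition alpha' : R[i] := \sum_(3 <= j < n.+1) sq (a j).
Definition beta' : R[i] := \sum_(3 <= j < n.+1) sq (bcoef j).
Definition gamma' : R[i] := - \sum_(3 <= j < n.+1) (cj (a j)) * bcoef j.
Definition delta' : R[i] :=
  (alpha' + beta' + sqrt ((alpha' - beta') ^+ 2 + 4 * sq gamma')) / 2.

Definition alpha1 : R[i] := \sum_(1 <= j < n.+1) sq (dcoef j).
Definition beta1 : R[i] := \sum_(1 <= j < n.+1) sq (ccoef j).
Definition gamma1 : R[i] := \sum_(1 <= j < n.+1) dcoef j * (cj (ccoef j)).
Definition delta1 : R[i] :=
  (alpha1 + beta1 + sqrt ((alpha1 - beta1) ^+ 2 + 4 * sq gamma1)) / 2.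

Definition gamma2 : R[i] := \sum_(1 <= j < n.+1) dcoef j * (cj (bcoef j)).
Definition gamma3 : R[i] := \sum_(1 <= j < n.+1) dcoef j * (cj (a j)).
Definition gamma4 : R[i] := \sum_(1 <= j < n.+1) ccoef j * (cj (bcoef j)).
Definition gamma5 : R[i] := \sum_(1 <= j < n.+1) ccoef j * (cj (a j)).
Definition delta2 : R[i] :=
  (sq gamma2 + sq gamma3 + sq gamma4 + sq gamma5
   + sqrt (((sq gamma2 + sq gamma3) - (sq gamma4 + sq gamma5)) ^+ 2
               + 4 * sq (gamma2 * (cj (gamma4)) + gamma3 * (cj (gamma5))))) / 2.

(* all quantities below are nonnegative reals inside C = R[i];
   x^(1/4) is written sqrtC (sqrtC x) *)
Definition bound15 : R[i] :=
  sqrt (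
    sqrt ((delta + 1 + sqrt ((delta - 1) ^+ 2 + 4 * delta')) / 2) / 2
    + sqrt (sqrt
        ((delta1 + delta + sqrt ((delta1 - delta) ^+ 2 + 4 * delta2)) / 2 + 1)) / 2).

End Cauchy.

From HB Require Import structures.
From mathcomp Require Import all_boot all_order all_algebra.
From mathcomp Require Import reals.
From mathcomp.real_closed Require Import complex.
From mathcomp Require Import zify ring lra.
Import Order.TTheory GRing.Theory Num.Theory.
Local Open Scope ring_scope.
Set Implicit Arguments. Unset Strict Implicit. Unset Printing Implicit Defensive.

(* Let v = (z^(n-1), ..., z, 1), an eigenvector of C_p for the eigenvalue z, so that
   the first row r_k of C_p^k satisfies r_k v = z^(n+k-1).
   With t = |z|^2 and X = |v|^2 = 1 + t + ... + t^(n-1) this gives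
     t^2 X = |r_1 v|^2 + |r_2 v|^2 + |v'|^2,   t^4 X <= |r_1 v|^2 + ... + |r_4 v|^2 + X,
   where v' keeps the coordinates z^(n-1), ..., z^2 of v.  Both right-hand sides are
   quadratic forms (H v, v) with H = H1 + H2, H1 = M^* M for the matrix M of rows
   r_1, r_2 (resp. r_3, r_4) and H2 the projection onto v' (resp. the Gram operator of
   r_1, r_2).  Bounding |H1 v|^2, |H2 v|^2 and |(H1 v, H2 v)| by Cauchy-Schwarz bounds
   (H v, v) by the largest eigenvalue of a 2 x 2 matrix times X, which yields
   t^2 <= (delta + 1 + sqrt((delta - 1)^2 + 4 delta'))/2 and
   t^4 <= (delta1 + delta + sqrt((delta1 - delta)^2 + 4 delta2))/2 + 1.
   Hence t is at most the mean of the square root of the first bound and the fourth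
   root of the second. *)

Section MaxEig2.
Variable C : numClosedFieldType.
Implicit Types A B g u : C.

(* The largest eigenvalue of the Hermitian matrix [[A, g], [g^*, B]], for real A and B. *)
Definition maxeig2 A B g : C := (A + B + sqrtC ((A - B) ^+ 2 + 4 * `|g| ^+ 2)) / 2.

Lemma maxeig2_ge0 A B g : 0 <= A -> 0 <= B -> 0 <= maxeig2 A B g.
Proof.
move=> A0 B0; rewrite divr_ge0 // !addr_ge0 // sqrtC_ge0 addr_ge0 //.
  by rewrite real_exprn_even_ge0 // rpredB // ger0_real.
by rewrite mulr_ge0 // exprn_ge0.
Qed.

Lemma maxeig2_conj A B g : maxeig2 A B g^* = maxeig2 A B g.
Proof. by rewrite /maxeig2 norm_conjC. Qed.

Lemma maxeig2_sqrtC A B g : 0 <= g ->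
  maxeig2 A B (sqrtC g) = (A + B + sqrtC ((A - B) ^+ 2 + 4 * g)) / 2.
Proof. by move=> g0; rewrite /maxeig2 ger0_norm ?sqrtC_ge0 // sqrtCK. Qed.

Lemma addr_conjC_le_norm u : u + u^* <= 2 * `|u|.
Proof.
have -> : u + u^* = 2 * 'Re u by rewrite ReE mulrC divfK // pnatr_eq0.
rewrite ler_pM2l ?ltr0n //.
apply: le_trans (real_ler_norm (Creal_Re u)) _.
exact: (leif_normC_Re_Creal u).1.
Qed.

End MaxEig2.

Lemma quad2_le_real (R : rcfType) (A B g x y : R) : 0 <= g -> 0 <= x -> 0 <= y ->
  A * x ^+ 2 + B * y ^+ 2 + 2 * g * x * y <=
  (A + B + Num.sqrt ((A - B) ^+ 2 + 4 * g ^+ 2)) / 2 * (x ^+ 2 + y ^+ 2).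
Proof.
move=> g0 x0 y0.
set S := Num.sqrt _.
have S2 : S ^+ 2 = (A - B) ^+ 2 + 4 * g ^+ 2.
  by rewrite sqr_sqrtr // addr_ge0 ?sqr_ge0 ?mulr_ge0.
have AB_S : (A - B) ^+ 2 <= S ^+ 2 by rewrite S2 lerDl mulr_ge0 ?sqr_ge0.
have S0 : 0 <= S by rewrite sqrtr_ge0.
(* With p = B - A + S and q = A - B + S, both nonnegative, p q = 4 g^2 and
   the claim reduces to the AM-GM inequality 4 g x y <= p x^2 + q y^2. *)
set p := B - A + S; set q := A - B + S.
have p0 : 0 <= p by rewrite /p; nra.
have q0 : 0 <= q by rewrite /q; nra.
have pq : p * q = 4 * g ^+ 2 by rewrite /p /q; nra.
have amgm : 4 * g * x * y <= p * x ^+ 2 + q * y ^+ 2.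
  rewrite -(ler_pXn2r (_ : (0 < 2)%N)) ?nnegrE ?addr_ge0 ?mulr_ge0 ?sqr_ge0 //.
  rewrite -subr_ge0.
  have -> : (p * x ^+ 2 + q * y ^+ 2) ^+ 2 - (4 * g * x * y) ^+ 2 =
    (p * x ^+ 2 - q * y ^+ 2) ^+ 2 + 4 * x ^+ 2 * y ^+ 2 * (p * q - 4 * g ^+ 2) by ring.
  by rewrite pq subrr mulr0 addr0 sqr_ge0.
have -> : (A + B + S) / 2 * (x ^+ 2 + y ^+ 2) =
    A * x ^+ 2 + B * y ^+ 2 + (p * x ^+ 2 + q * y ^+ 2) / 2 by rewrite /p /q; field.
clearbody S p q; lra.
Qed.

Section RealPart.
Variable R : rcfType.
Local Open Scope complex_scope.

Lemma sqrtC_real (r : R) : 0 <= r -> sqrtC (r%:C : R[i]) = (Num.sqrt r)%:C.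
Proof. by move=> r0; rewrite -{1}(sqr_sqrtr r0) rmorphXn sqrCK // ler0c sqrtr_ge0. Qed.

Lemma quad2_le (A B g x y : R[i]) : A \is Num.real -> B \is Num.real ->
  0 <= x -> 0 <= y ->
  A * x ^+ 2 + B * y ^+ 2 + 2 * `|g| * x * y <= maxeig2 A B g * (x ^+ 2 + y ^+ 2).
Proof.
move=> /complex_realP[A' ->] /complex_realP[B' ->] x0 y0.
have [g' eg] := complex_realP _ (ger0_real (normr_ge0 g)).
have [x' ex] := complex_realP _ (ger0_real x0).
have [y' ey] := complex_realP _ (ger0_real y0).
have g0 : 0 <= g' by rewrite -ler0c -eg.
move: x0 y0; rewrite /maxeig2 eg ex ey !ler0c => x0 y0.
have -> : (A'%:C - B'%:C) ^+ 2 + 4 * g'%:C ^+ 2 = ((A' - B') ^+ 2 + 4 * g' ^+ 2)%:C :> R[i].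
  by rewrite rmorphD rmorphXn rmorphM rmorph_nat rmorphXn rmorphB.
rewrite sqrtC_real ?addr_ge0 ?sqr_ge0 ?mulr_ge0 ?sqr_ge0 //.
have -> : A'%:C * x'%:C ^+ 2 + B'%:C * y'%:C ^+ 2 + 2 * g'%:C * x'%:C * y'%:C =
    (A' * x' ^+ 2 + B' * y' ^+ 2 + 2 * g' * x' * y')%:C :> R[i].
  by rewrite !(rmorphXn, rmorphD, rmorphM, rmorph_nat).
set S := Num.sqrt _.
have -> : (A'%:C + B'%:C + S%:C) / 2 * (x'%:C ^+ 2 + y'%:C ^+ 2) =
    ((A' + B' + S) / 2 * (x' ^+ 2 + y' ^+ 2))%:C :> R[i].
  by rewrite !(rmorphXn, rmorphD, rmorphM, rmorph_nat, fmorphV).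
by rewrite lecR; apply: quad2_le_real.
Qed.

End RealPart.

Section Inner.
Variables (R : rcfType) (I : finType) (P : pred I).
Local Notation C := R[i].
Implicit Types (x y v w : I -> C) (s t : C).

Definition norm2 x : C := \sum_(i | P i) `|x i| ^+ 2.
Definition inner x y : C := \sum_(i | P i) x i * (y i)^*.

(* The largest eigenvalue of M M^*, the squared operator norm of the matrix M
   with rows r0 and r1 and columns indexed by P. *)
Definition opnorm2 r0 r1 : C := maxeig2 (norm2 r0) (norm2 r1) (inner r0 r1).

Lemma norm2_ge0 x : 0 <= norm2 x.
Proof. by apply: sumr_ge0 => i _; rewrite exprn_ge0. Qed.

Lemma opnorm2_ge0 r0 r1 : 0 <= opnorm2 r0 r1.
Proof. by rewrite maxeig2_ge0 ?norm2_ge0. Qed.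

Lemma norm2E x : norm2 x = inner x x.
Proof. by apply: eq_bigr => i _; rewrite normCK. Qed.

Lemma innerC x y : inner y x = (inner x y)^*.
Proof.
rewrite /inner rmorph_sum; apply: eq_bigr => i _.
by rewrite rmorphM /= conjCK mulrC.
Qed.

Lemma innerDr v x y : inner v (fun i => x i + y i) = inner v x + inner v y.
Proof.
by rewrite /inner -big_split; apply: eq_bigr => i _; rewrite rmorphD mulrDr.
Qed.

Lemma inner_conj x y : inner (fun i => (x i)^*) (fun i => (y i)^*) = (inner x y)^*.
Proof.
rewrite /inner rmorph_sum; apply: eq_bigr => i _.
by rewrite /= rmorphM /= !conjCK mulrC.
Qed.

Lemma norm2_conj x : norm2 (fun i => (x i)^*) = norm2 x.
Proof. by apply: eq_bigr => i _; rewrite norm_conjC. Qed.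

Lemma norm2D x y : norm2 (fun i => x i + y i) = norm2 x + norm2 y + (inner x y + (inner x y)^*).
Proof.
rewrite !norm2E -innerC /inner -!big_split /=; apply: eq_bigr => i _.
rewrite rmorphD /=; ring.
Qed.

Lemma norm2Z s x : norm2 (fun i => s * x i) = `|s| ^+ 2 * norm2 x.
Proof. by rewrite /norm2 mulr_sumr; apply: eq_bigr => i _; rewrite normrM exprMn. Qed.

Lemma innerZZ s t x y : inner (fun i => s * x i) (fun i => t * y i) = s * t^* * inner x y.
Proof. by rewrite /inner mulr_sumr; apply: eq_bigr => i _; rewrite rmorphM /=; ring. Qed.

Lemma cauchy_schwarz x y : `|inner x y| ^+ 2 <= norm2 x * norm2 y.
Proof.
have [Y0 | nY0] := eqVneq (norm2 y) 0.
  have y0 i : P i -> y i = 0.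
    move=> Pi; apply/eqP; rewrite -normr_eq0 -sqrf_eq0.
    by apply/eqP; apply: (psumr_eq0P _ Y0) => // j _; rewrite exprn_ge0.
  have -> : inner x y = 0 by rewrite /inner big1 // => i /y0 ->; rewrite conjC0 mulr0.
  by rewrite normr0 expr0n /= Y0 mulr0.
have Ygt0 : 0 < norm2 y by rewrite lt_def nY0 norm2_ge0.
have expand s t : s^* = s -> \sum_(i | P i) `|s * x i - t * y i| ^+ 2 =
    s * s * inner x x - s * t^* * inner x y - s * t * inner y x + t * t^* * inner y y.
  move=> sR; rewrite /inner !mulr_sumr -!sumrB -big_split /=; apply: eq_bigr => i _.
  by rewrite normCK rmorphB !rmorphM /= sR; ring.
set Y := norm2 y; set X := norm2 x; set d := inner x y.
have key : \sum_(i | P i) `|Y * x i - d * y i| ^+ 2 = Y * (X * Y - `|d| ^+ 2).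
  rewrite expand; last by rewrite geC0_conj ?norm2_ge0.
  rewrite -!norm2E -/X -/Y -/d innerC -/d normCK; ring.
have : 0 <= Y * (X * Y - `|d| ^+ 2) by rewrite -key sumr_ge0 // => i _; rewrite exprn_ge0.
by rewrite pmulr_rge0 // subr_ge0 mulrC.
Qed.

Lemma norm2_comb_le x y s t :
  norm2 (fun i => s * x i + t * y i) <= opnorm2 x y * (`|s| ^+ 2 + `|t| ^+ 2).
Proof.
rewrite norm2D !norm2Z innerZZ.
apply: le_trans (_ : `|s| ^+ 2 * norm2 x + `|t| ^+ 2 * norm2 y +
                     2 * `|inner x y| * `|s| * `|t| <= _).
  rewrite lerD2l; apply: le_trans (addr_conjC_le_norm _) _.
  rewrite !normrM norm_conjC.
  by have -> : 2 * `|inner x y| * `|s| * `|t| = 2 * (`|s| * `|t| * `|inner x y|) by ring.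
rewrite [_ * norm2 x]mulrC [_ * norm2 y]mulrC.
by apply: quad2_le; rewrite ?normr_ge0 // ger0_real // norm2_ge0.
Qed.

Lemma norm2D_le x y a1 a2 g X1 X2 : a1 \is Num.real -> a2 \is Num.real ->
  0 <= g -> 0 <= X1 -> 0 <= X2 ->
  norm2 x <= a1 * X1 -> norm2 y <= a2 * X2 -> `|inner x y| ^+ 2 <= g * X1 * X2 ->
  norm2 (fun i => x i + y i) <= maxeig2 a1 a2 (sqrtC g) * (X1 + X2).
Proof.
move=> a1R a2R g0 X10 X20 hx hy hxy.
have hxy' : `|inner x y| <= sqrtC g * sqrtC X1 * sqrtC X2.
  rewrite -!sqrtCM ?nnegrE ?mulr_ge0 //.
  by rewrite -(sqrCK (normr_ge0 (inner x y))) ler_sqrtC ?nnegrE ?exprn_ge0 ?mulr_ge0.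
rewrite norm2D.
apply: le_trans (_ : a1 * sqrtC X1 ^+ 2 + a2 * sqrtC X2 ^+ 2 +
                     2 * `|sqrtC g| * sqrtC X1 * sqrtC X2 <= _).
  rewrite !sqrtCK ger0_norm ?sqrtC_ge0 //; apply: lerD; first exact: lerD.
  apply: le_trans (addr_conjC_le_norm _) _.
  by rewrite -!mulrA ler_pM2l ?ltr0n // !mulrA.
have -> : X1 + X2 = sqrtC X1 ^+ 2 + sqrtC X2 ^+ 2 by rewrite !sqrtCK.
by apply: quad2_le; rewrite ?sqrtC_ge0.
Qed.

Lemma inner_le_of_norm2_le v w lam : 0 <= lam -> 0 <= inner v w ->
  norm2 w <= lam * inner v w -> inner v w <= lam * norm2 v.
Proof.
move=> lam0 vw0 hw.
have [-> | nvw0] := eqVneq (inner v w) 0; first by rewrite mulr_ge0 ?norm2_ge0.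
have vw_gt0 : 0 < inner v w by rewrite lt_def nvw0 vw0.
have : inner v w ^+ 2 <= norm2 v * (lam * inner v w).
  rewrite -{1}(ger0_norm vw0); apply: le_trans (cauchy_schwarz _ _) _.
  by rewrite ler_wpM2l // norm2_ge0.
have -> : norm2 v * (lam * inner v w) = lam * norm2 v * inner v w by ring.
by rewrite expr2 ler_pM2r.
Qed.

(* The quadratic form of H = H1 + H2 at v, with x = H1 v and y = H2 v, is bounded
   through the 2 x 2 matrix of the constants controlling the two blocks. *)
Lemma inner_split_le v x y a1 a2 g : 0 <= a1 -> 0 <= a2 -> 0 <= g ->
  0 <= inner v x -> 0 <= inner v y ->
  norm2 x <= a1 * inner v x -> norm2 y <= a2 * inner v y ->
  `|inner x y| ^+ 2 <= g * inner v x * inner v y ->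
  inner v x + inner v y <= maxeig2 a1 a2 (sqrtC g) * norm2 v.
Proof.
move=> a10 a20 g0 vx0 vy0 hx hy hxy.
rewrite -innerDr; apply: inner_le_of_norm2_le; rewrite ?innerDr ?addr_ge0 //.
  exact: maxeig2_ge0.
by apply: norm2D_le; rewrite ?ger0_real.
Qed.

End Inner.

Section Vec2.
Variable R : rcfType.
Local Notation C := R[i].

Definition vec2 (u0 u1 : C) : 'I_2 -> C := fun k => if val k == 0%N then u0 else u1.

Lemma norm2_vec2 (u0 u1 : C) : norm2 predT (vec2 u0 u1) = `|u0| ^+ 2 + `|u1| ^+ 2.
Proof. by rewrite /norm2 big_ord_recl big_ord1. Qed.

Lemma inner_vec2 (u0 u1 w0 w1 : C) : inner predT (vec2 u0 u1) (vec2 w0 w1) = u0 * w0^* + u1 * w1^*.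
Proof. by rewrite /inner big_ord_recl big_ord1. Qed.

Lemma norm2_vec2_comb (s t u0 u1 w0 w1 : C) :
  norm2 predT (fun k => s * vec2 u0 u1 k + t * vec2 w0 w1 k) =
  `|s * u0 + t * w0| ^+ 2 + `|s * u1 + t * w1| ^+ 2.
Proof. by rewrite /norm2 big_ord_recl big_ord1. Qed.

Lemma cauchy_schwarz2 (a b u w : C) :
  `|a * u + b * w| ^+ 2 <= (`|a| ^+ 2 + `|b| ^+ 2) * (`|u| ^+ 2 + `|w| ^+ 2).
Proof.
have := cauchy_schwarz predT (vec2 a b) (vec2 u^* w^*).
by rewrite inner_vec2 !norm2_vec2 !conjCK !norm_conjC.
Qed.

End Vec2.

Section Rows.
Variables (R : rcfType) (I : finType).
Local Notation C := R[i].
Local Notation T := (@predT I).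
Implicit Types (r v x : I -> C) (Q : pred I).

Definition rowmul r v : C := \sum_i r i * v i.

(* M^* M v, for the matrix M with rows r0 and r1. *)
Definition gram2 r0 r1 v : I -> C :=
  fun i => rowmul r0 v * (r0 i)^* + rowmul r1 v * (r1 i)^*.

Definition mask Q v : I -> C := fun i => if Q i then v i else 0.

Lemma norm2_mask Q v : norm2 T (mask Q v) = norm2 Q v.
Proof.
rewrite /norm2 [RHS]big_mkcond; apply: eq_bigr => i _.
by rewrite /mask; case: (Q i); rewrite ?normr0 ?expr0n.
Qed.

Lemma inner_mask Q x v : inner T x (mask Q v) = inner Q x v.
Proof.
rewrite /inner [RHS]big_mkcond; apply: eq_bigr => i _.
by rewrite /mask; case: (Q i); rewrite ?conjC0 ?mulr0.
Qed.

Lemma norm2_le_predT Q x : norm2 Q x <= norm2 T x.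
Proof.
rewrite /norm2 [X in _ <= X](bigID Q) /= lerDl sumr_ge0 // => i _.
exact: exprn_ge0.
Qed.

Lemma inner_gram2 r0 r1 v :
  inner T v (gram2 r0 r1 v) = `|rowmul r0 v| ^+ 2 + `|rowmul r1 v| ^+ 2.
Proof.
rewrite !normCK [rowmul r0 v * _]mulrC [rowmul r1 v * _]mulrC {2 4}/rowmul.
rewrite /inner !mulr_sumr -big_split /=; apply: eq_bigr => i _.
by rewrite !(rmorphD, rmorphM) /= !conjCK; ring.
Qed.

Lemma norm2_gram2_le (P : pred I) r0 r1 v :
  norm2 P (gram2 r0 r1 v) <= opnorm2 P r0 r1 * (`|rowmul r0 v| ^+ 2 + `|rowmul r1 v| ^+ 2).
Proof.
have := norm2_comb_le P (fun i => (r0 i)^*) (fun i => (r1 i)^*) (rowmul r0 v) (rowmul r1 v).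
by rewrite /opnorm2 !norm2_conj inner_conj maxeig2_conj.
Qed.

Lemma gram2_mask_le Q r0 r1 v :
  `|rowmul r0 v| ^+ 2 + `|rowmul r1 v| ^+ 2 + norm2 Q v <=
  maxeig2 (opnorm2 T r0 r1) 1 (sqrtC (opnorm2 Q r0 r1)) * norm2 T v.
Proof.
rewrite -inner_gram2 norm2E -(inner_mask Q v v).
apply: inner_split_le; rewrite ?opnorm2_ge0 ?inner_gram2 ?inner_mask -?norm2E //.
- by rewrite addr_ge0 ?exprn_ge0.
- exact: norm2_ge0.
- exact: norm2_gram2_le.
- by rewrite norm2_mask mul1r.
apply: le_trans (cauchy_schwarz _ _ _) _.
by rewrite ler_wpM2r ?norm2_ge0 ?norm2_gram2_le.
Qed.

Lemma inner_gram2_gram2_le rd rc ra rb v :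
  `|inner T (gram2 rd rc v) (gram2 ra rb v)| ^+ 2 <=
  opnorm2 predT (vec2 (inner T rd rb) (inner T rd ra)) (vec2 (inner T rc rb) (inner T rc ra))
  * (`|rowmul rd v| ^+ 2 + `|rowmul rc v| ^+ 2) * (`|rowmul ra v| ^+ 2 + `|rowmul rb v| ^+ 2).
Proof.
set pd := rowmul rd v; set pc := rowmul rc v; set pa := rowmul ra v; set pb := rowmul rb v.
set g2 := inner T rd rb; set g3 := inner T rd ra; set g4 := inner T rc rb; set g5 := inner T rc ra.
(* The cross term pairs (pb, pa) with conj(pd) (g2, g3) + conj(pc) (g4, g5), whose
   norm is controlled by the 2 x 2 matrix with rows (g2, g3) and (g4, g5). *)
have -> : inner T (gram2 rd rc v) (gram2 ra rb v) =
    (pb * (pd^* * g2 + pc^* * g4) + pa * (pd^* * g3 + pc^* * g5))^*.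
  rewrite /g2 /g3 /g4 /g5 /inner !mulrDr !mulr_sumr -!big_split rmorph_sum /=.
  apply: eq_bigr => i _; rewrite /gram2 -/pa -/pb -/pc -/pd.
  by rewrite !(rmorphD, rmorphM) /= !conjCK; ring.
rewrite norm_conjC; apply: le_trans (cauchy_schwarz2 _ _ _ _) _.
rewrite [X in _ <= X]mulrC [`|pb| ^+ 2 + _]addrC ler_wpM2l ?addr_ge0 ?exprn_ge0 //.
have := norm2_comb_le predT (vec2 g2 g3) (vec2 g4 g5) pd^* pc^*.
by rewrite norm2_vec2_comb !norm_conjC.
Qed.

Lemma gram2_gram2_le rd rc ra rb v :
  `|rowmul rd v| ^+ 2 + `|rowmul rc v| ^+ 2 + (`|rowmul ra v| ^+ 2 + `|rowmul rb v| ^+ 2) <=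
  maxeig2 (opnorm2 T rd rc) (opnorm2 T ra rb)
    (sqrtC (opnorm2 predT (vec2 (inner T rd rb) (inner T rd ra))
                          (vec2 (inner T rc rb) (inner T rc ra)))) * norm2 T v.
Proof.
rewrite -!inner_gram2.
apply: inner_split_le; rewrite ?opnorm2_ge0 ?inner_gram2 ?addr_ge0 ?exprn_ge0 //.
- exact: norm2_gram2_le.
- exact: norm2_gram2_le.
exact: inner_gram2_gram2_le.
Qed.

End Rows.

Lemma big_nat_rev_ord (G : zmodType) (n k : nat) (F : nat -> G) : (0 < k)%N ->
  \sum_(k <= j < n.+1) F j = \sum_(c < n | (c < n.+1 - k)%N) F (n - c)%N.
Proof.
move=> k0; rewrite big_nat_rev -{1}(add0n k) big_addn big_mkord.
rewrite -(big_ord_widen n (fun c => F (n - c)%N)); last by lia.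
by apply: eq_bigr => i _; congr F; lia.
Qed.

Lemma big_nat1_rev_ord (G : zmodType) (n : nat) (F : nat -> G) :
  \sum_(1 <= j < n.+1) F j = \sum_(c < n) F (n - c)%N.
Proof. by rewrite big_nat_rev_ord //; apply: eq_bigl => i; rewrite subn1 /= ltn_ord. Qed.

Lemma geom_sum_shift2 (G : comNzRingType) (m : nat) (t : G) :
  t ^+ 2 * \sum_(c < m.+2) t ^+ (m.+1 - c) =
  t ^+ m.+2 + t ^+ m.+3 + \sum_(c < m.+2 | (c < m)%N) t ^+ (m.+1 - c).
Proof.
rewrite mulr_sumr !big_ord_recl /=.
rewrite -(big_ord_widen m.+2 (fun c => t ^+ (m.+1 - c))); last by lia.
rewrite -!exprD addrA [t ^+ (2 + (m.+1 - 0)) + _]addrC; congr (_ + _ + _).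
- by congr (_ ^+ _); rewrite /bump /=; lia.
- apply: eq_bigr => i _; rewrite -exprD; congr (_ ^+ _).
  by case: i => i hi /=; rewrite /bump /=; lia.
Qed.

Lemma entn_row0 (R : realType) (N : nat) (M : 'M[R[i]]_N.+1) (c : 'I_N.+1) :
  entn M 0 c = M ord0 c.
Proof.
rewrite /entn; case: insubP => [i0 _ /= e0|]; last by rewrite ltn0Sn.
case: insubP => [j0 _ /= e1|]; last by rewrite ltn_ord.
by congr (M _ _); apply: val_inj.
Qed.

Definition rev_powers (R : rcfType) (n : nat) (z : R[i]) : 'I_n.+1 -> R[i] :=
  fun c => z ^+ (n - c)%N.
Arguments rev_powers {R} n z.

Lemma norm2_rev_powers (R : rcfType) (n : nat) (z : R[i]) (Q : pred 'I_n.+1) :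
  norm2 Q (rev_powers n z) = \sum_(c | Q c) (`|z| ^+ 2) ^+ (n - c)%N.
Proof. by apply: eq_bigr => c _; rewrite normrX exprAC. Qed.

Lemma norm2_rev_powers_ge1 (R : rcfType) (n : nat) (z : R[i]) :
  1 <= norm2 predT (rev_powers n z).
Proof.
rewrite norm2_rev_powers (bigD1 ord_max) //= subnn expr0 lerDl.
by rewrite sumr_ge0 // => i _; rewrite exprn_ge0 ?exprn_ge0.
Qed.

Section Companion.
Variables (R : realType) (n : nat) (a : nat -> R[i]) (z : R[i]).
Hypothesis root_z : root (monic_poly_of n.+1 a) z.

Lemma companion_rev_powers :
  companion n.+1 a *m \col_c rev_powers n z c = z *: \col_c rev_powers n z c.
Proof.
apply/matrixP => i j; rewrite ord1 !mxE /rev_powers.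
case: i => [[|i] lt_i_n] /=.
- under eq_bigr => k _ do rewrite !mxE /=.
  move: root_z; rewrite /root /monic_poly_of hornerD hornerXn horner_sum.
  rewrite (eq_bigr (fun k => a k * z ^+ k.-1)); last by move=> k _; rewrite hornerZ hornerXn.
  rewrite big_nat1_rev_ord subn0 -exprS addr_eq0 => /eqP ->.
  rewrite -sumrN; apply: eq_bigr => k _; rewrite mulNr; congr (- (_ * _)).
  by congr (_ ^+ _); case: k => k hk /=; lia.
- rewrite (bigD1 (Ordinal (ltnW lt_i_n))) //= big1 ?addr0.
    by rewrite !mxE /= eqxx mul1r -exprS; congr (_ ^+ _); lia.
  move=> k /negbTE nki; rewrite !mxE /=.
  case: ifP => [/eqP/succn_inj e|]; last by rewrite mul0r.
  by move: nki; rewrite -(inj_eq val_inj) /= e eqxx.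
Qed.

Lemma companion_row0X k :
  \sum_(c < n.+1) (companion n.+1 a ^+ k) ord0 c * rev_powers n z c = z ^+ (k + n).
Proof.
have eigX : companion n.+1 a ^+ k *m \col_c rev_powers n z c = z ^+ k *: \col_c rev_powers n z c.
  elim: k => [|k IH]; first by rewrite expr0 mul1mx scale1r.
  rewrite exprS -mulmxE -mulmxA IH -scalemxAr companion_rev_powers.
  by rewrite scalerA exprSr.
have := congr1 (fun M : 'M_(n.+1, 1) => M ord0 ord0) eigX.
rewrite !mxE /rev_powers subn0 exprD => <-.
by apply: eq_bigr => c _; rewrite mxE.
Qed.

End Companion.

(* Coordinate c of a coefficient row holds the coefficient of index m.+2 - c;
   these are the indices >= 3. *)
Definition idx_ge3 (m : nat) : pred 'I_m.+2 := fun c => (c < m)%N.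
Arguments idx_ge3 : clear implicits.

Section Coefficients.
Variables (R : realType) (m : nat) (a : nat -> R[i]).
Local Notation n := m.+2.
Local Notation T := (@predT 'I_n).

Definition coef_row (f : nat -> R[i]) : 'I_n -> R[i] := fun c => f (n - c)%N.

Lemma sum_sq_coef_row f : \sum_(1 <= j < n.+1) sq (f j) = norm2 T (coef_row f).
Proof. by rewrite big_nat1_rev_ord. Qed.

Lemma sum_conj_coef_row f g :
  \sum_(1 <= j < n.+1) f j * cj (g j) = inner T (coef_row f) (coef_row g).
Proof. by rewrite big_nat1_rev_ord. Qed.

Lemma big_nat3_idx_ge3 (F : nat -> R[i]) :
  \sum_(3 <= j < n.+1) F j = \sum_(c | idx_ge3 m c) F (n - c)%N.
Proof. by rewrite big_nat_rev_ord //; apply: eq_bigl => c; rewrite !subSS subn0. Qed.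

(* The coefficient functions are generalized before rewriting: unifying two of
   them would otherwise unfold powers of the companion matrix. *)
Lemma deltaE : delta n a = opnorm2 T (coef_row a) (coef_row (bcoef n a)).
Proof.
rewrite /delta /opnorm2 /maxeig2 /alpha /beta /gamma /sq /sqrt.
move: (bcoef n a) => b.
by rewrite !sum_sq_coef_row sum_conj_coef_row normrN -norm_conjC -innerC.
Qed.

Lemma delta'E : delta' n a = opnorm2 (idx_ge3 m) (coef_row a) (coef_row (bcoef n a)).
Proof.
rewrite /delta' /opnorm2 /maxeig2 /alpha' /beta' /gamma' /sq /sqrt.
move: (bcoef n a) => b.
rewrite !big_nat3_idx_ge3 normrN -[X in `|X|]conjCK norm_conjC rmorph_sum /=.
congr ((_ + _ + sqrtC (_ + 4 * `|_| ^+ 2)) / 2).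
by apply: eq_bigr => c _; rewrite /cj rmorphM /= conjCK mulrC.
Qed.

Lemma delta1E : delta1 n a = opnorm2 T (coef_row (dcoef n a)) (coef_row (ccoef n a)).
Proof.
rewrite /delta1 /opnorm2 /maxeig2 /alpha1 /beta1 /gamma1 /sq /sqrt.
move: (dcoef n a) (ccoef n a) => d c.
by rewrite !sum_sq_coef_row sum_conj_coef_row.
Qed.

Lemma delta2E : delta2 n a =
  opnorm2 predT
    (vec2 (inner T (coef_row (dcoef n a)) (coef_row (bcoef n a)))
          (inner T (coef_row (dcoef n a)) (coef_row a)))
    (vec2 (inner T (coef_row (ccoef n a)) (coef_row (bcoef n a)))
          (inner T (coef_row (ccoef n a)) (coef_row a))).
Proof.
rewrite /delta2 /gamma2 /gamma3 /gamma4 /gamma5.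
move: (dcoef n a) (ccoef n a) (bcoef n a) => d c b.
rewrite /opnorm2 /maxeig2 !norm2_vec2 inner_vec2 /sq /cj /sqrt.
by rewrite !sum_conj_coef_row !addrA.
Qed.

Variable z : R[i].
Hypothesis root_z : root (monic_poly_of n a) z.

Lemma rowmul_acoef : rowmul (coef_row a) (rev_powers m.+1 z) = - z ^+ n.
Proof.
rewrite -[n]/(1 + m.+1)%N -(companion_row0X root_z 1) expr1 -sumrN.
by apply: eq_bigr => c _; rewrite !mxE /= mulNr opprK.
Qed.

Lemma rowmul_first_rowX k :
  rowmul (coef_row (fun j => entn (companion n a ^+ k) 0 (n - j))) (rev_powers m.+1 z) =
  z ^+ (k + m.+1).
Proof.
rewrite -(companion_row0X root_z k); apply: eq_bigr => c _.
by rewrite /coef_row subKn ?entn_row0 // ltnW.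
Qed.

Lemma rowmul_bcoef : rowmul (coef_row (bcoef n a)) (rev_powers m.+1 z) = z ^+ n.+1.
Proof. exact: (rowmul_first_rowX 2). Qed.

Lemma rowmul_ccoef : rowmul (coef_row (ccoef n a)) (rev_powers m.+1 z) = z ^+ n.+2.
Proof. exact: (rowmul_first_rowX 3). Qed.

Lemma rowmul_dcoef : rowmul (coef_row (dcoef n a)) (rev_powers m.+1 z) = z ^+ n.+3.
Proof. exact: (rowmul_first_rowX 4). Qed.

End Coefficients.

Section RootBound.
Variables (R : rcfType) (m : nat) (z : R[i]) (ra rb rc rd : 'I_m.+2 -> R[i]).
Local Notation n := m.+2.
Local Notation T := (@predT 'I_n).
Local Notation v := (rev_powers m.+1 z).
Local Notation t := (`|z| ^+ 2).
Hypotheses (ra_v : rowmul ra v = - z ^+ n) (rb_v : rowmul rb v = z ^+ n.+1).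

Lemma sqnorm_exprz k : `|z ^+ k| ^+ 2 = t ^+ k.
Proof. by rewrite normrX exprAC. Qed.

Lemma norm2_rev_powers_gt0 : 0 < norm2 T v.
Proof. by apply: lt_le_trans (norm2_rev_powers_ge1 _ _); rewrite ltr01. Qed.

Lemma norm2_rev_powers_shift : t ^+ 2 * norm2 T v = t ^+ n + t ^+ n.+1 + norm2 (idx_ge3 m) v.
Proof. by rewrite !norm2_rev_powers geom_sum_shift2. Qed.

Lemma root_norm4_le : `|z| ^+ 4 <= maxeig2 (opnorm2 T ra rb) 1 (sqrtC (opnorm2 (idx_ge3 m) ra rb)).
Proof.
have := gram2_mask_le (idx_ge3 m) ra rb v.
rewrite ra_v rb_v normrN !sqnorm_exprz -norm2_rev_powers_shift.
by rewrite -exprM ler_pM2r // norm2_rev_powers_gt0.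
Qed.

Hypotheses (rc_v : rowmul rc v = z ^+ n.+2) (rd_v : rowmul rd v = z ^+ n.+3).

Lemma root_norm8_le :
  `|z| ^+ 8 <= maxeig2 (opnorm2 T rd rc) (opnorm2 T ra rb)
    (sqrtC (opnorm2 predT (vec2 (inner T rd rb) (inner T rd ra))
                          (vec2 (inner T rc rb) (inner T rc ra)))) + 1.
Proof.
have := gram2_gram2_le rd rc ra rb v.
rewrite ra_v rb_v rc_v rd_v normrN !sqnorm_exprz.
set X := norm2 T v; set A := t ^+ n; set B := t ^+ n.+1.
have -> : t ^+ n.+2 = t ^+ 2 * A by rewrite -exprD.
have -> : t ^+ n.+3 = t ^+ 2 * B by rewrite -exprD.
move=> hD.
have shift : t ^+ 2 * X = A + B + norm2 (idx_ge3 m) v := norm2_rev_powers_shift.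
have WX : norm2 (idx_ge3 m) v <= X := norm2_le_predT _ _.
rewrite -[8%N]/(2 * 4)%N exprM -(ler_pM2r norm2_rev_powers_gt0) -/X mulrDl mul1r.
(* t^4 X = t^2 (A + B + W) and t^2 W <= t^2 X = A + B + W <= A + B + X. *)
have -> : t ^+ 4 * X = t ^+ 2 * A + t ^+ 2 * B + t ^+ 2 * norm2 (idx_ge3 m) v.
  by rewrite -[4%N]/(2 + 2)%N exprD -mulrA shift !mulrDr.
apply: le_trans (_ : t ^+ 2 * A + t ^+ 2 * B + (A + B + X) <= _).
  rewrite lerD2l; apply: le_trans (_ : t ^+ 2 * X <= _).
    by rewrite ler_wpM2l ?exprn_ge0.
  by rewrite shift lerD2l.
have -> : t ^+ 2 * A + t ^+ 2 * B + (A + B + X) = t ^+ 2 * B + t ^+ 2 * A + (A + B) + X.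
  by rewrite addrA; congr (_ + _); rewrite [t ^+ 2 * A + _]addrC addrA.
by rewrite lerD2r.
Qed.

End RootBound.

Lemma le_sqrtC_mean_roots (C : numClosedFieldType) (x L Y : C) : 0 <= x ->
  x ^+ 4 <= L -> x ^+ 8 <= Y -> x <= sqrtC (sqrtC L / 2 + sqrtC (sqrtC Y) / 2).
Proof.
have le_sqrtC y w : 0 <= y -> y ^+ 2 <= w -> y <= sqrtC w.
  move=> y0 yw; rewrite -(sqrCK y0) ler_sqrtC // nnegrE ?exprn_ge0 //.
  exact: le_trans (exprn_ge0 _ y0) yw.
move=> x0 xL xY.
have x20 : 0 <= x ^+ 2 by rewrite exprn_ge0.
apply: (le_sqrtC) => //.
rewrite [x ^+ 2]splitr; apply: lerD; rewrite ler_pM2r ?invr_gt0 ?ltr0n //.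
  by apply: (le_sqrtC); rewrite // -exprM.
apply: (le_sqrtC) => //.
by apply: (le_sqrtC); rewrite ?exprn_ge0 // -!exprM.
Qed.

Theorem mainTheorem15 (R : realType) (n : nat) (a : nat -> R[i]) (z : R[i]) :
  (2 <= n)%N -> a 1%N != 0 -> root (monic_poly_of n a) z ->
  `|z| <= bound15 n a.
Proof.
case: n => [|[|m]] // _ _ root_z.
have h4 := root_norm4_le (rowmul_acoef root_z) (rowmul_bcoef root_z).
have h8 := root_norm8_le (rowmul_acoef root_z) (rowmul_bcoef root_z)
  (rowmul_ccoef root_z) (rowmul_dcoef root_z).
rewrite maxeig2_sqrtC ?opnorm2_ge0 // in h4.
rewrite maxeig2_sqrtC ?opnorm2_ge0 // in h8.
rewrite /bound15 /sqrt deltaE delta'E delta1E delta2E.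
exact: le_sqrtC_mean_roots (normr_ge0 z) h4 h8.
Qed.
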